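(* Let $q\in\mathbb{C}\setminus\{0\}$, fix a square root $q^{1/2}$, and let $H$ be the Hopf algebra generated by $X,g,g^{-1}$ with relations $gX=qXg$, $gg^{-1}=g^{-1}g=1$, coproduct $\Delta g=g\otimes g$, $\Delta X=X\otimes g^{-1}+g\otimes X$, counit $\epsilon(g)=1,\epsilon(X)=0$ (the elements $g^kX^m$, $k\in\mathbb{Z}$, $m\in\mathbb{Z}_{\ge0}$, form a basis). Define the linear functional $D_q:H\to\mathbb{C}$ by $D_q(g^kX^m)=\delta_{m,1}q^{k/2}$. Then for every $n\ge1$, $k\in\mathbb{Z}$, $m\ge 0$, the $n$-fold convolution power $D_q^n=D_q^{\otimes n}\circ\Delta^{n-1}$ satisfies \[D_q^n(g^kX^m)=\delta_{n,m}\,[[m]]_q!\;q^{km/2},\] where $[[m]]_q=q^{m-1}+q^{m-3}+\cdots+q^{1-m}$ and $[[m]]_q!=[[1]]_q[[2]]_q\cdots[[m]]_q$. Equivalently, for all $i,j\in\mathbb{Z}$, $D_q^n(g^iX^mg^j)=\delta_{n,m}[[m]]_q!\,q^{(i-j)m/2}$.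
   Context: $\Delta^{n-1}:H\to H^{\otimes n}$ denotes the iterated coproduct ($\Delta^0=\mathrm{id}$). *)

From mathcomp Require Import all_boot all_order all_algebra.
From mathcomp Require Import complex.
From mathcomp Require Import Rstruct.
From Stdlib Require Rdefinitions.

Set Implicit Arguments.
Unset Strict Implicit.
Unset Printing Implicit Defensive.

Import Order.TTheory GRing.Theory Num.Theory.
Local Open Scope ring_scope.

Notation CC := (complex Rdefinitions.R).

(* PBW basis of H: the pair (k, m) stands for g^k X^m (k : int, m : nat). *)
Definition basisH := (int * nat)%type.

(* Formal finite linear combinations of basis elements of H, resp. of
   pure tensors of basis elements of H^{(x) n} (a pure basis tensor is the
   list [b_1; ...; b_n]). Everything below is linear, so these formal sums
   faithfully represent elements of H and H^{(x) n}. *)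
Definition Helt := seq (CC * basisH).
Definition tensor := seq (CC * seq basisH).

(* Product of basis elements, using g X = q X g, i.e. X^b g^c = q^{-bc} g^c X^b:
   (g^a X^b)(g^c X^d) = q^{-bc} g^{a+c} X^{b+d}. *)
Definition bmul (q : CC) (x y : basisH) : CC * basisH :=
  (q ^ (- ((x.2)%:Z * y.1)), (x.1 + y.1, (x.2 + y.2)%N)).

Definition hmul (q : CC) (x y : Helt) : Helt :=
  [seq (let r := bmul q p.2 p'.2 in (p.1 * p'.1 * r.1, r.2)) | p <- x, p' <- y].

Definition gX (k : int) (m : nat) : Helt := [:: (1, (k, m))].

Fixpoint wmul (q : CC) (u v : seq basisH) : CC * seq basisH :=
  match u, v with
  | a :: u', b :: v' =>
      let w := wmul q u' v' in
      let ab := bmul q a b in (ab.1 * w.1, ab.2 :: w.2)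
  | _, _ => (1, [::])
  end.

Definition tmul (q : CC) (x y : tensor) : tensor :=
  [seq (let w := wmul q p.2 r.2 in (p.1 * r.1 * w.1, w.2)) | p <- x, r <- y].

(* Delta X = X (x) g^{-1} + g (x) X ;  1 (x) 1 *)
Definition DeltaX : tensor :=
  [:: (1, [:: (0%:Z, 1%N); ((-1 : int), 0%N)]); (1, [:: (1%:Z, 0%N); (0%:Z, 1%N)])].
Definition one2 : tensor := [:: (1, [:: (0%:Z, 0%N); (0%:Z, 0%N)])].

(* The coproduct is the algebra map with Delta g = g (x) g (hence
   Delta g^k = g^k (x) g^k for k in Z) and Delta X as above, so
   Delta (g^k X^m) = (g^k (x) g^k) (Delta X)^m. *)
Definition Delta (q : CC) (b : basisH) : tensor :=
  tmul q [:: (1, [:: (b.1, 0%N); (b.1, 0%N)])] (iter b.2 (tmul q DeltaX) one2).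

Definition DeltaFirst (q : CC) (t : CC * seq basisH) : tensor :=
  match t.2 with
  | b :: bs => [seq (t.1 * p.1, p.2 ++ bs) | p <- Delta q b]
  | [::] => [::]
  end.

(* iterated coproduct Delta^j : H -> H^{(x) (j+1)}, Delta^0 = id,
   Delta^{j+1} = (Delta (x) id^{(x) j}) o Delta^j, on basis elements *)
Fixpoint iterDelta (q : CC) (j : nat) (b : basisH) : tensor :=
  match j with
  | 0 => [:: (1, [:: b])]
  | j'.+1 => flatten [seq DeltaFirst q t | t <- iterDelta q j' b]
  end.

(* D_q(g^k X^m) = delta_{m,1} q^{k/2}, with s a fixed square root of q *)
Definition Dq (s : CC) (b : basisH) : CC := if b.2 == 1%N then s ^ b.1 else 0.

Definition DqTensor (s : CC) (t : CC * seq basisH) : CC :=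
  t.1 * \prod_(b <- t.2) Dq s b.

(* n-fold convolution power D_q^n = D_q^{(x) n} o Delta^{n-1} (n >= 1),
   extended linearly to H *)
Definition convPow (q s : CC) (n : nat) (x : Helt) : CC :=
  \sum_(p <- x) p.1 * \sum_(t <- iterDelta q n.-1 p.2) DqTensor s t.

Definition qint (q : CC) (m : nat) : CC :=
  \sum_(i < m) q ^ (m%:Z - 1 - 2 * (i : nat)%:Z).

Definition qfact (q : CC) (m : nat) : CC := \prod_(i < m) qint q i.+1.

From mathcomp Require Import all_boot all_order all_algebra.
From mathcomp Require Import complex.
From mathcomp Require Import Rstruct.
From mathcomp Require Import zify ring.

Set Implicit Arguments.
Unset Strict Implicit.
Unset Printing Implicit Defensive.
Import GRing.Theory Num.Theory.
Local Open Scope ring_scope.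

(* D_q^n is the n-th convolution power of D_q, and since iterDelta applies Delta
   to the first tensor factor, D_q^n = (..((D_q * D_q) * D_q)..) * D_q.  By
   induction, the j-fold power is supported in X-degree j, where it is the
   character g |-> q^(j/2) times [[j]]_q!.  Convolving once more with D_q on
   Delta (g^k X^m) = (g^k (x) g^k) (X (x) g^-1 + g (x) X)^m therefore extracts the
   coefficient of X^j (x) X in (Delta X)^m, with the g's evaluated by characters.
   Moving X past g costs a factor q^-1, which gives a q-Pascal recurrence for
   these coefficients; in X-degree 1 of the second factor it is the recurrence
   [[m+1]]_q = q^m + q^-1 [[m]]_q. *)

Section TensorEvaluation.
Variable q : CC.

Definition teval (f : seq basisH -> CC) (T : tensor) : CC := \sum_(p <- T) p.1 * f p.2.

Definition sized (n : nat) (T : tensor) : bool := all (fun p => size p.2 == n) T.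

Lemma teval_cat f T1 T2 : teval f (T1 ++ T2) = teval f T1 + teval f T2.
Proof. by rewrite /teval big_cat. Qed.

Lemma teval_flatten f (F : CC * seq basisH -> tensor) T :
  teval f (flatten [seq F t | t <- T]) = \sum_(t <- T) teval f (F t).
Proof. by rewrite /teval big_flatten big_map. Qed.

Lemma tevalZ c f T : teval (fun v => c * f v) T = c * teval f T.
Proof. by rewrite /teval mulr_sumr; apply: eq_bigr => p _; ring. Qed.

Lemma eq_in_teval f g T : {in T, forall p, f p.2 = g p.2} -> teval f T = teval g T.
Proof. by move=> fg; rewrite /teval !big_seq; apply: eq_bigr => p /fg ->. Qed.

Lemma eq_teval2 f g T : sized 2 T ->
  (forall a b, f [:: a; b] = g [:: a; b]) -> teval f T = teval g T.
Proof.
move=> /allP T2 fg; apply: eq_in_teval => -[c v] /T2 /=.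
by case: v => [|a [|b []]].
Qed.

Lemma teval_tmul1 f c u T :
  teval f (tmul q [:: (c, u)] T)
  = teval (fun v => c * (wmul q u v).1 * f (wmul q u v).2) T.
Proof. by rewrite /teval /tmul /= cats0 big_map; apply: eq_bigr => r _ /=; ring. Qed.

Lemma teval_tmul_cons f a x T :
  teval f (tmul q (a :: x) T) = teval f (tmul q [:: a] T) + teval f (tmul q x T).
Proof. by rewrite /tmul /= cats0 teval_cat. Qed.

Lemma size_wmul u v : size (wmul q u v).2 = minn (size u) (size v).
Proof. by elim: u v => [|a u IH] [|b v] //=; rewrite IH minnSS. Qed.

Lemma sized_tmul n x y : sized n x -> sized n y -> sized n (tmul q x y).
Proof.
move=> /allP xn /allP yn; apply/allP => p /allpairsP [[a b] [/= /xn an /yn bn ->]] /=.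
by rewrite size_wmul (eqP an) (eqP bn) minnn.
Qed.

End TensorEvaluation.

Section DeltaXPowers.
Variable q : CC.
Hypothesis q_neq0 : q != 0.

Definition DeltaXpow (m : nat) : tensor := iter m (tmul q DeltaX) one2.

Lemma sized_DeltaXpow m : sized 2 (DeltaXpow m).
Proof. by elim: m => [|m IH] //=; apply: sized_tmul. Qed.

Lemma sized_Delta b : sized 2 (Delta q b).
Proof. exact/sized_tmul/sized_DeltaXpow. Qed.

Definition bichar (N J : nat) (x y : CC) (v : seq basisH) : CC :=
  match v with
  | [:: (a0, b0); (a1, b1)] => (b0 == N)%:R * (b1 == J)%:R * x ^ a0 * y ^ a1
  | _ => 0
  end.

(* The coefficient of X^N (x) X^J in (Delta X)^m, where the powers of g in the
   two factors are evaluated at the characters g |-> x and g |-> y. *)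
Definition DXcoef (N J : nat) (x y : CC) (m : nat) : CC :=
  teval (bichar N J x y) (DeltaXpow m).

Lemma DXcoef0 N J x y : DXcoef N J x y 0 = (N == 0)%:R * (J == 0)%:R.
Proof. by rewrite /DXcoef /teval big_seq1 /= !mulr1 mul1r !(eq_sym 0%N). Qed.

Lemma DXcoefS N J x y m : x != 0 -> y != 0 ->
  DXcoef N J x y m.+1 = (if N is N'.+1 then y^-1 * DXcoef N' J (x / q) y m else 0)
                      + (if J is J'.+1 then x * DXcoef N J' x (y / q) m else 0).
Proof.
move=> x0 y0; have DX2 := sized_DeltaXpow m.
rewrite /DXcoef /DeltaXpow iterS -/(DeltaXpow m) teval_tmul_cons !teval_tmul1.
have teval0 f : (forall a b, f [:: a; b] = 0) -> teval f (DeltaXpow m) = 0.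
  by move=> f0; rewrite (@eq_teval2 _ (fun=> 0)) // /teval big1 // => p _; rewrite mulr0.
congr (_ + _); [case: N => [|N]| case: J => [|J]].
- by apply: teval0 => -[? ?] [? ?] /=; rewrite !mul0r mulr0.
- rewrite -tevalZ; apply: eq_teval2 => // -[a0 b0] [a1 b1] /=.
  rewrite add0r eqSS add0n expfzMl exprz_inv -addrC expfzDr //.
  rewrite mul0r oppr0 expr0z exprN1 !mul1r.
  ring.
- by apply: teval0 => -[? ?] [? ?] /=; rewrite mulr0 !mul0r mulr0.
- rewrite -tevalZ; apply: eq_teval2 => // -[a0 b0] [a1 b1] /=.
  rewrite add0r eqSS add0n expfzMl exprz_inv expfzDr //.
  rewrite mul0r oppr0 expr0z expr1z !mul1r.
  ring.
Qed.

Lemma DXcoef_deg0 m : forall N x y, x != 0 -> y != 0 ->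
  DXcoef N 0 x y m = (N == m)%:R * y ^ (- m%:Z).
Proof.
elim: m => [|m IH] N x y x0 y0; first by rewrite DXcoef0 mulr1.
rewrite DXcoefS // addr0; case: N => [|N]; first by rewrite mul0r.
rewrite IH ?mulf_neq0 ?invr_neq0 // eqSS -exprN1 mulrCA -expfzDr //.
by congr (_ * y ^ _); lia.
Qed.

Lemma qint0 : qint q 0 = 0.
Proof. by rewrite /qint big_ord0. Qed.

Lemma qintS m : qint q m.+1 = q ^ m%:Z + q^-1 * qint q m.
Proof.
rewrite /qint big_ord_recl /=; congr (_ + _); first by congr (q ^ _); lia.
rewrite mulr_sumr; apply: eq_bigr => i _ /=.
by rewrite -exprN1 -expfzDr //; congr (q ^ _); rewrite /bump /=; lia.
Qed.

Lemma qfactS n : qfact q n.+1 = qfact q n * qint q n.+1.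
Proof. by rewrite /qfact big_ord_recr. Qed.

Lemma DXcoef_deg1 m : forall N x y, x != 0 -> y != 0 ->
  DXcoef N 1 x y m = (N.+1 == m)%:R * x * y ^ (1 - m%:Z) * qint q m.
Proof.
elim: m => [|m IH] N x y x0 y0; first by rewrite DXcoef0 mulr0 !mul0r.
rewrite DXcoefS // DXcoef_deg0 ?mulf_neq0 ?invr_neq0 // eqSS.
have -> : (if N is N'.+1 then y^-1 * DXcoef N' 1 (x / q) y m else 0)
          = (N == m)%:R * (y^-1 * ((x / q) * y ^ (1 - m%:Z) * qint q m)).
  case: N => [|N]; last by rewrite IH ?mulf_neq0 ?invr_neq0 //; ring.
  by case: m {IH} => [|m]; rewrite ?qint0 ?mulr0 ?mul0r.
case: eqP => _; last by rewrite !mul0r mulr0 addr0.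
have yS : y ^ (1 - m%:Z) = y * y ^ (- m%:Z) by rewrite expfzDr.
have yS' : y ^ (1 - m.+1%:Z) = y ^ (- m%:Z) by congr (y ^ _); lia.
rewrite qintS expfzMl exprz_inv opprK expfzDr // -exprN1 mulrCA -expfzDr //.
by rewrite yS yS' exprN1; field; rewrite q_neq0 y0.
Qed.

Lemma teval_bichar_Delta N J x y k m : x != 0 -> y != 0 ->
  teval (bichar N J x y) (Delta q (k, m)) = x ^ k * y ^ k * DXcoef N J x y m.
Proof.
move=> x0 y0; rewrite /Delta teval_tmul1 /DXcoef -tevalZ.
apply: eq_teval2 => [|[a0 b0] [a1 b1] /=]; first exact: sized_DeltaXpow.
by rewrite !mul0r oppr0 expr0z !add0n !expfzDr //; ring.
Qed.

End DeltaXPowers.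

Section Convolution.
Variables q s : CC.

Definition tensor2 (phi psi : basisH -> CC) (v : seq basisH) : CC :=
  if v is [:: u0; u1] then phi u0 * psi u1 else 0.

Definition convDq (phi : basisH -> CC) (b : basisH) : CC :=
  teval (tensor2 phi (Dq s)) (Delta q b).

Definition tensorDq (phi : basisH -> CC) (v : seq basisH) : CC :=
  if v is u :: us then phi u * \prod_(w <- us) Dq s w else 0.

Lemma sized_iterDelta j b : sized j.+1 (iterDelta q j b).
Proof.
elim: j => [|j IH] //=; apply/allP => t /flatten_mapP [[c [|u us]] /(allP IH)] //=.
move=> /eqP [] usj /mapP [p /(allP (sized_Delta q u)) /eqP p2 ->] /=.
by rewrite size_cat p2 usj.
Qed.

Lemma teval_tensorDq_DeltaFirst phi c u us :
  teval (tensorDq phi) (DeltaFirst q (c, u :: us)) = c * tensorDq (convDq phi) (u :: us).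
Proof.
have -> : teval (tensorDq phi) (DeltaFirst q (c, u :: us))
          = teval (fun v => c * tensorDq phi (v ++ us)) (Delta q u).
  by rewrite /teval big_map; apply: eq_bigr => p _ /=; ring.
rewrite /= /convDq mulrA -tevalZ mulrC -tevalZ.
by apply: eq_teval2 => [|a a']; [exact: sized_Delta | rewrite /= big_cons; ring].
Qed.

Lemma teval_tensorDq_iterDeltaS j phi b :
  teval (tensorDq phi) (iterDelta q j.+1 b) = teval (tensorDq (convDq phi)) (iterDelta q j b).
Proof.
rewrite /= teval_flatten /teval big_seq [RHS]big_seq.
apply: eq_bigr => -[c [|u us]] /(allP (sized_iterDelta j b)) //= _.
exact: teval_tensorDq_DeltaFirst.
Qed.

Lemma teval_tensorDq_iterDelta j phi b :
  teval (tensorDq phi) (iterDelta q j b) = iter j convDq phi b.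
Proof.
elim: j phi => [|j IH] phi; first by rewrite /teval big_seq1 /= big_nil mul1r mulr1.
by rewrite teval_tensorDq_iterDeltaS IH iterSr.
Qed.

Lemma convPow_seq1 n c b : convPow q s n [:: (c, b)] = c * iter n.-1 convDq (Dq s) b.
Proof.
rewrite /convPow big_seq1 -teval_tensorDq_iterDelta /teval !big_seq; congr (_ * _).
apply: eq_bigr => -[d [|u us]] /(allP (sized_iterDelta n.-1 b)) //= _.
by rewrite /DqTensor big_cons.
Qed.

Hypotheses (q_neq0 : q != 0) (s_sqr : s ^+ 2 = q).

Lemma s_neq0 : s != 0.
Proof. by apply: contra_neq q_neq0 => s0; rewrite -s_sqr s0 expr0n. Qed.

(* The induction hypothesis makes tensor2 (iter j convDq (Dq s)) (Dq s) a
   multiple of bichar j.+1 1 (s ^ j.+1) s, which reduces the step to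
   DXcoef_deg1. *)
Lemma iter_convDq_Dq j k m :
  iter j convDq (Dq s) (k, m) = (m == j.+1)%:R * qfact q j.+1 * s ^ (k * j.+1%:Z).
Proof.
have s0 := s_neq0.
elim: j k m => [|j IH] k m.
  rewrite /= /Dq /qfact big_ord1 /qint big_ord1 /=.
  by case: (m == 1)%N; rewrite ?mul0r // mulr1 mul1r mulr1.
set n := j.+1; rewrite iterS /convDq.
rewrite (@eq_teval2 _ (fun v => qfact q n * bichar n 1 (s ^ n%:Z) s v)); last 2 first.
- exact: sized_Delta.
- move=> [a0 b0] [a1 b1] /=; rewrite IH /Dq /= exprz_exp.
  case: (b1 == 1)%N; last by rewrite !(mulr0, mul0r, mulr0n).
  by rewrite (mulrC a0) mulr1n; ring.
rewrite tevalZ teval_bichar_Delta ?expfz_neq0 // DXcoef_deg1 ?expfz_neq0 // (eq_sym m).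
case: eqP => [<-|_]; last by rewrite !mul0r !mulr0.
have sn : s ^ n%:Z * s ^ (1 - n.+1%:Z) = 1.
  by rewrite -expfzDr //; have -> : n%:Z + (1 - n.+1%:Z) = 0 by lia.
have sk : s ^ (k * n.+1%:Z) = (s ^ n%:Z) ^ k * s ^ k.
  by rewrite exprz_exp -expfzDr //; congr (s ^ _); nia.
by rewrite qfactS sk !mulr1n !mul1r sn; ring.
Qed.

End Convolution.

Theorem mainTheorem2 (q s : CC) (hq : q != 0) (hs : s ^+ 2 = q) :
  forall (n : nat), (1 <= n)%N ->
  (forall (k : int) (m : nat),
     convPow q s n (gX k m) = (n == m)%:R * qfact q m * s ^ (k * m%:Z)) /\
  (forall (i j : int) (m : nat),
     convPow q s n (hmul q (hmul q (gX i 0) (gX 0 m)) (gX j 0))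
       = (n == m)%:R * qfact q m * s ^ ((i - j) * m%:Z)).
Proof.
move=> n n_gt0.
have convPow_gX (c : CC) k m :
    convPow q s n [:: (c, (k, m))] = c * ((n == m)%:R * qfact q m * s ^ (k * m%:Z)).
  rewrite convPow_seq1 iter_convDq_Dq // prednK // (eq_sym m).
  by case: eqP => [->|_] //; rewrite !mul0r.
split=> [k m | i j m]; first by rewrite /gX convPow_gX mul1r.
have -> : hmul q (hmul q (gX i 0) (gX 0 m)) (gX j 0) = [:: (q ^ (- (m%:Z * j)), (i + j, m))].
  by rewrite /hmul /gX /bmul /= !mul0r oppr0 expr0z !mul1r addr0 add0n addn0.
rewrite convPow_gX -{1}hs exprnP exprz_exp mulrCA -expfzDr ?(s_neq0 hq hs) //.
by congr (_ * _ * s ^ _); ring.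
Qed.
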